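(* Define $a_0 = 0$ and $a_n = \sum_{k=0}^{n-1} k!\,(n-k-1)!$ for $n \geq 1$. Then for every natural number $n$, $$G_n = \sum_{k=0}^{n} (-1)^{k-1} a_k\, S(n,k).$$
   Context: The Genocchi numbers $G_n$ ($n \in \mathbb{N}$) are defined by the exponential generating function $\frac{2x}{e^x+1} = \sum_{n=0}^{\infty} G_n \frac{x^n}{n!}$. The Stirling numbers of the second kind $S(n,k)$ ($0 \le k \le n$) are the integers defined by the polynomial identity $X^n = \sum_{k=0}^{n} S(n,k)\, X(X-1)\cdots(X-k+1)$. *)

From HB Require Import structures.
From mathcomp Require Import all_boot all_order all_algebra.
Set Implicit Arguments. Unset Strict Implicit. Unset Printing Implicit Defensive.
Import Order.TTheory GRing.Theory Num.Theory.
Local Open Scope ring_scope.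

Definition fps := nat -> rat.

Definition fps_mul (f g : fps) : fps :=
  fun n => \sum_(i < n.+1) f i * g (n - i)%N.

Definition egf (u : nat -> rat) : fps := fun n => u n / (n`!)%:R.

Definition fps_exp_plus_1 : fps := fun n => 1 / (n`!)%:R + (n == 0%N)%:R.

Definition fps_2x : fps := fun n => (n == 1%N)%:R *+ 2.

(* G is the Genocchi sequence: 2x/(e^x+1) = sum G_n x^n/n!, i.e. (since
   e^x+1 is invertible as a formal power series) egf G * (e^x + 1) = 2x. *)
Definition is_genocchi (G : nat -> rat) : Prop :=
  forall n, fps_mul (egf G) fps_exp_plus_1 n = fps_2x n.

Definition is_stirling2 (S : nat -> nat -> int) : Prop :=
  forall n : nat,
    ('X^n : {poly int}) =
      \sum_(k < n.+1) S n k *: \prod_(i < k) ('X - (i%:R)%:P).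

Definition a_seq (n : nat) : nat :=
  if n is 0 then 0 else \sum_(k < n) (k`! * (n - k - 1)`!)%N.

From HB Require Import structures.
From mathcomp Require Import all_boot all_order all_algebra.
From mathcomp Require Import ring zify.
Import Order.TTheory GRing.Theory Num.Theory.
Set Implicit Arguments. Unset Strict Implicit. Unset Printing Implicit Defensive.
Local Open Scope ring_scope.

(* Both sides satisfy the recurrence [sum_(i <= n) C(n, i) u_i + u_n = 2 [n = 1]],
   which determines [u] because [u_n] occurs with coefficient 2.  For [G] this is
   the coefficient of [x^n / n!] in [egf G * (e^x + 1) = 2x].  For
   [T_n = sum_k c_k S(n, k)] with [c_k = (-1)^(k-1) a_k], expanding [(X + 1)^n]
   in the falling-factorial basis in two ways gives
   [sum_i C(n, i) S(i, k) = S(n, k) + (k + 1) S(n, k + 1)], so the recurrence for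
   [T] becomes [sum_k (2 c_k + k c_(k-1)) S(n, k) = 2 [n = 1]].  Now
   [2 c_k + k c_(k-1)] is twice the coefficient of [X] in [X (X - 1) ... (X - k + 1)]
   (this is the recurrence [2 a_(k+1) = (k + 1) a_k + 2 k!]), and the sum of these
   coefficients against [S(n, k)] is the coefficient of [X] in [X^n]. *)

Section FallingPoly.
Variable R : comNzRingType.

Definition falling_poly (k : nat) : {poly R} := \prod_(i < k) ('X - (i%:R)%:P).

Lemma falling_polyS k : falling_poly k.+1 = falling_poly k * ('X - (k%:R)%:P).
Proof. by rewrite /falling_poly big_ord_recr. Qed.

Lemma size_falling_poly k : size (falling_poly k) = k.+1.
Proof. by rewrite size_prod_XsubC /index_enum -enumT size_enum_ord. Qed.

Lemma coef_falling_poly_top k : (falling_poly k)`_k = 1.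
Proof.
have /monicP := monic_prod_XsubC (index_enum 'I_k) predT (fun i : 'I_k => (i%:R : R)).
by rewrite /lead_coef size_falling_poly.
Qed.

Lemma coef_falling_poly_gt k j : (k < j)%N -> (falling_poly k)`_j = 0.
Proof. by move=> ltkj; apply: nth_default; rewrite size_falling_poly. Qed.

Lemma falling_poly_free M (b : nat -> R) :
  \sum_(k < M) b k *: falling_poly k = 0 -> forall k, (k < M)%N -> b k = 0.
Proof.
elim: M => [|M IH] // sum0.
have bM0 : b M = 0.
  have := congr1 (fun p : {poly R} => p`_M) sum0.
  rewrite /= big_ord_recr /= coefD coefZ coef_falling_poly_top mulr1 coef_sum.
  by rewrite big1 ?add0r ?coef0 // => i _; rewrite coefZ coef_falling_poly_gt ?mulr0.
move: sum0; rewrite big_ord_recr /= bM0 scale0r addr0 => /IH bk0 k.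
by rewrite ltnS leq_eqVlt => /predU1P [-> //|]; apply: bk0.
Qed.

Lemma falling_poly_shift k :
  falling_poly k \Po ('X + 1) = falling_poly k + k%:R *: falling_poly k.-1.
Proof.
case: k => [|k]; first by rewrite /falling_poly big_ord0 comp_polyC scale0r addr0.
have -> : falling_poly k.+1 \Po ('X + 1) = ('X + 1) * falling_poly k.
  rewrite /falling_poly rmorph_prod big_ord_recl /=; congr (_ * _).
    by rewrite comp_polyB comp_polyX comp_polyC polyC0 subr0.
  apply: eq_bigr => i _; rewrite comp_polyB comp_polyX comp_polyC.
  rewrite /bump /= add1n -addn1 natrD polyCD opprD polyC1 /=; ring.
by rewrite falling_polyS -mul_polyC !polyC_natr /= -addn1 natrD; ring.
Qed.

Lemma coef0_falling_poly k : (falling_poly k.+1)`_0 = 0.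
Proof.
elim: k => [|k IH].
  by rewrite falling_polyS /falling_poly big_ord0 mul1r coefB coefX coefC subr0.
by rewrite falling_polyS mulrBr coefB coefMX coefMC IH mul0r subrr.
Qed.

Lemma coef1_falling_poly k : (falling_poly k.+1)`_1 = (-1) ^+ k * (k`!)%:R.
Proof.
elim: k => [|k IH].
  by rewrite falling_polyS /falling_poly big_ord0 mul1r coefB coefX coefC subr0 mul1r.
rewrite falling_polyS mulrBr coefB coefMX coefMC coef0_falling_poly IH.
by rewrite factS natrM exprS /=; ring.
Qed.

End FallingPoly.

Lemma map_falling_poly (R R' : comNzRingType) (f : {rmorphism R -> R'}) k :
  map_poly f (falling_poly R k) = falling_poly R' k.
Proof.
rewrite rmorph_prod; apply: eq_bigr => i _.
by rewrite rmorphB /= map_polyX map_polyC /= rmorph_nat.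
Qed.

Definition binom_sum (R : nzRingType) (u : nat -> R) (n : nat) : R :=
  \sum_(i < n.+1) 'C(n, i)%:R * u i + u n.

(* The term [u n] occurs twice in [binom_sum u n], so the recurrence determines [u]. *)
Lemma binom_sum_inj (R : numDomainType) (u v : nat -> R) :
  (forall n, binom_sum u n = binom_sum v n) -> u =1 v.
Proof.
move=> euv; elim/ltn_ind=> n IH; move: (euv n); rewrite /binom_sum !big_ord_recr /=.
rewrite (eq_bigr (fun i : 'I_n => 'C(n, i)%:R * v i)) => [|i _]; last by rewrite IH.
by rewrite !binn !mul1r -!addrA => /addrI; rewrite -!mulr2n => /pmulrnI; apply.
Qed.

Lemma a_seqS k : a_seq k.+1 = (\sum_(j < k.+1) j`! * (k - j)`!)%N.
Proof. by apply: eq_bigr => j _; rewrite subnAC subSS subn0. Qed.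

Lemma a_seq_rec k : (2 * a_seq k.+1 = k.+1 * a_seq k + 2 * k`!)%N.
Proof.
case: k => [|k]; first by rewrite /a_seq big_ord1.
rewrite !a_seqS.
have shift_left : (\sum_(j < k.+2) j`! * (k.+1 - j)`! =
    k.+1`! + \sum_(j < k.+1) j.+1`! * (k - j)`!)%N.
  by rewrite big_ord_recl /= fact0 subn0 mul1n.
have shift_right : (\sum_(j < k.+2) j`! * (k.+1 - j)`! =
    \sum_(j < k.+1) j`! * (k.+1 - j)`! + k.+1`!)%N.
  by rewrite big_ord_recr /= subnn fact0 muln1.
have split_weight : (k.+2 * \sum_(j < k.+1) j`! * (k - j)`! =
    \sum_(j < k.+1) j.+1`! * (k - j)`! + \sum_(j < k.+1) j`! * (k.+1 - j)`!)%N.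
  rewrite big_distrr -big_split /=; apply: eq_bigr => j _.
  have := ltn_ord j; rewrite ltnS => lejk.
  by rewrite factS (subSn lejk) factS -[in k.+2](subnKC lejk); ring.
lia.
Qed.

Definition genocchi_coef (k : nat) : rat := (-1) ^ (k%:Z - 1) * (a_seq k)%:R.

Lemma expN1_pred (R : unitRingType) k : (-1 : R) ^ (k%:Z - 1) = - (-1) ^+ k.
Proof.
case: k => [|k]; first by rewrite sub0r exprN1 invrN1 expr0.
have -> : k.+1%:Z - 1 = k by rewrite -addn1 PoszD addrK.
by rewrite exprS mulN1r opprK.
Qed.

(* Both sides are [2 (-1)^(k-1) (k-1)!] for [k > 0], by the recurrence for [a_seq]. *)
Lemma genocchi_coef_rec k :
  2 * genocchi_coef k + k%:R * genocchi_coef k.-1 = 2 * (falling_poly rat k)`_1.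
Proof.
case: k => [|k].
  by rewrite /genocchi_coef /falling_poly big_ord0 coefC mulr0 mul0r addr0.
rewrite coef1_falling_poly /genocchi_coef !expN1_pred /= exprS.
have /(congr1 (fun m : nat => m%:R : rat)) := a_seq_rec k.
rewrite natrD !natrM => rec.
have -> : 2 * (- (-1 * (-1) ^+ k) * (a_seq k.+1)%:R) +
      k.+1%:R * (- (-1) ^+ k * (a_seq k)%:R)
    = (-1) ^+ k * (2 * (a_seq k.+1)%:R - k.+1%:R * (a_seq k)%:R) :> rat by ring.
by rewrite rec; ring.
Qed.

Section StirlingExpansion.
Variable S : nat -> nat -> int.
Hypothesis S_stirling : is_stirling2 S.

(* [is_stirling2] says nothing about [S i k] for [k > i]; there [S(i, k)] is [0]. *)
Definition stirling_ext (i k : nat) : rat := if (k <= i)%N then (S i k)%:~R else 0.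

Lemma stirling_ext_gt i k : (i < k)%N -> stirling_ext i k = 0.
Proof. by rewrite /stirling_ext ltnNge => /negbTE ->. Qed.

Lemma sum_stirling_ext (F : nat -> rat) i M : (i < M)%N ->
  \sum_(k < M) F k * stirling_ext i k = \sum_(k < i.+1) F k * (S i k)%:~R.
Proof.
move=> ltiM; rewrite (big_ord_widen M (fun k => F k * (S i k)%:~R)) // [RHS]big_mkcond.
by apply: eq_bigr => k _; rewrite /stirling_ext ltnS; case: ifP; rewrite ?mulr0.
Qed.

Lemma Xn_falling_expansion i M : (i < M)%N ->
  'X^i = \sum_(k < M) stirling_ext i k *: falling_poly rat k.
Proof.
move=> ltiM; have := congr1 (map_poly (intr : int -> rat)) (S_stirling i).
rewrite map_polyXn rmorph_sum /= => ->.
under eq_bigr => k _ do rewrite map_polyZ (map_falling_poly (intr : int -> rat)).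
rewrite (big_ord_widen M (fun k => (S i k)%:~R *: falling_poly rat k)) // [LHS]big_mkcond.
apply: eq_bigr => k _; rewrite /stirling_ext ltnS.
by case: ifP => _; rewrite ?scale0r.
Qed.

(* Compare the falling-factorial coordinates of both expansions of [(X + 1)^n]. *)
Lemma stirling_binomial n k : (k < n.+2)%N ->
  \sum_(i < n.+1) 'C(n, i)%:R * stirling_ext i k =
    stirling_ext n k + k.+1%:R * stirling_ext n k.+1.
Proof.
move: k; pose b k := \sum_(i < n.+1) 'C(n, i)%:R * stirling_ext i k -
            (stirling_ext n k + k.+1%:R * stirling_ext n k.+1).
suff /falling_poly_free b0 : \sum_(k < n.+2) b k *: falling_poly rat k = 0.
  by move=> k /b0 /eqP; rewrite subr_eq0 => /eqP.
have binomial_side : ('X + 1) ^+ n = \sum_(k < n.+2)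
    (\sum_(i < n.+1) 'C(n, i)%:R * stirling_ext i k) *: falling_poly rat k.
  rewrite exprD1n; under eq_bigr => i _ do
    rewrite (Xn_falling_expansion (leqW (ltn_ord i))) -scaler_nat scaler_sumr.
  rewrite exchange_big /=; apply: eq_bigr => k _; rewrite scaler_suml.
  by apply: eq_bigr => i _; rewrite scalerA.
have shift_side : ('X + 1) ^+ n = \sum_(k < n.+2)
    (stirling_ext n k + k.+1%:R * stirling_ext n k.+1) *: falling_poly rat k.
  rewrite -comp_Xn_poly (Xn_falling_expansion (ltnW (ltnSn n.+1))) linear_sum /=.
  under eq_bigr => k _ do rewrite linearZ /= falling_poly_shift scalerDr scalerA.
  under [RHS]eq_bigr => k _ do rewrite scalerDl -scalerA.
  rewrite !big_split /=; congr (_ + _).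
  rewrite big_ord_recl /= mulr0 scale0r add0r [RHS]big_ord_recr /=.
  rewrite stirling_ext_gt // scale0r scaler0 addr0.
  by apply: eq_bigr => k _; rewrite scalerA mulrC.
under eq_bigr => k _ do rewrite scalerBl.
by rewrite sumrB -binomial_side -shift_side subrr.
Qed.

Definition stirling_transform (c : nat -> rat) (n : nat) : rat :=
  \sum_(k < n.+1) c k * (S n k)%:~R.

Lemma binom_sum_stirling_transform c n :
  binom_sum (stirling_transform c) n =
    \sum_(k < n.+2) (2 * c k + k%:R * c k.-1) * stirling_ext n k.
Proof.
rewrite /binom_sum /stirling_transform -(sum_stirling_ext _ (ltnW (ltnSn n.+1))).
under eq_bigr => i _ do
  rewrite -(sum_stirling_ext _ (leqW (ltn_ord i))) big_distrr.
rewrite exchange_big /=.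
have inner (k : 'I_n.+2) : \sum_(i < n.+1) 'C(n, i)%:R * (c k * stirling_ext i k) =
    c k * (stirling_ext n k + k.+1%:R * stirling_ext n k.+1).
  rewrite -stirling_binomial // big_distrr.
  by apply: eq_bigr => i _; rewrite mulrCA.
have shift : \sum_(k < n.+2) c k * (k.+1%:R * stirling_ext n k.+1) =
    \sum_(k < n.+2) k%:R * c k.-1 * stirling_ext n k.
  rewrite big_ord_recr /= stirling_ext_gt // !mulr0 addr0.
  rewrite [RHS]big_ord_recl /= !mul0r add0r.
  by apply: eq_bigr => k _; rewrite /bump /= add1n mulrCA mulrA.
under eq_bigr => k _ do rewrite inner mulrDr.
rewrite big_split shift -!big_split /=.
by apply: eq_bigr => k _; ring.
Qed.

Lemma binom_sum_genocchi_stirling n :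
  binom_sum (stirling_transform genocchi_coef) n = 2 * (n == 1)%:R.
Proof.
rewrite binom_sum_stirling_transform.
under eq_bigr => k _ do rewrite genocchi_coef_rec -mulrA.
rewrite -mulr_sumr; congr (_ * _).
have := congr1 (fun p : {poly rat} => p`_1) (Xn_falling_expansion (ltnW (ltnSn n.+1))).
rewrite /= coefXn coef_sum eq_sym => ->.
by apply: eq_bigr => k _; rewrite coefZ mulrC.
Qed.

End StirlingExpansion.

Lemma genocchi_binom_sum G : is_genocchi G -> forall n, binom_sum G n = 2 * (n == 1)%:R.
Proof.
move=> G_genocchi n; have := G_genocchi n.
rewrite /fps_mul /egf /fps_exp_plus_1 /fps_2x => egf_eq.
have -> : 2 * (n == 1)%:R = n`!%:R * ((n == 1)%:R *+ 2) :> rat.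
  by case: (n =P 1) => [->|_]; rewrite ?mulr0n ?mulr0 // mulr1n mul1r mulr1.
rewrite -egf_eq mulr_sumr.
have term (i : 'I_n.+1) :
    n`!%:R * (G i / i`!%:R * (1 / (n - i)`!%:R + ((n - i)%N == 0%N)%:R)) =
    'C(n, i)%:R * G i + (i == n :> nat)%:R * G i.
  have fact_neq0 m : (m`!%:R : rat) != 0 by rewrite pnatr_eq0 -lt0n fact_gt0.
  have := fact_neq0 i; have := fact_neq0 (n - i)%N.
  rewrite -(bin_fact (ltnSE (ltn_ord i))) natrM.
  case: (eqVneq (i : nat) n) => [-> | neq_in].
    by rewrite subnn eqxx binn fact0 mul1r => _ _; field.
  have -> : (n - i == 0)%N = false.
    by rewrite subn_eq0 leqNgt ltn_neqAle neq_in -ltnS ltn_ord.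
  by rewrite natrM /= mul0r !addr0 => ? ?; field; apply/andP.
rewrite /binom_sum (eq_bigr _ (fun i _ => term i)) big_split /=; congr (_ + _).
rewrite big_ord_recr /= eqxx mul1r big1 ?add0r // => i _.
by rewrite (ltn_eqF (ltn_ord i)) mul0r.
Qed.

Theorem mainTheorem6 (G : nat -> rat) (S : nat -> nat -> int) :
  is_genocchi G -> is_stirling2 S ->
  forall n : nat,
    G n = \sum_(k < n.+1)
            ((-1 : rat) ^ (k%:Z - 1) * (a_seq k)%:R * (S n k)%:~R).
Proof.
move=> G_genocchi S_stirling n.
apply: (@binom_sum_inj _ G (stirling_transform S genocchi_coef)) => m.
by rewrite genocchi_binom_sum // binom_sum_genocchi_stirling.
Qed.
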